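(* Let $R$ be a ring such that $R/J(R)$ is an abelian $\pi$-regular ring. Then $R$ is feckly clean.
   Context: Rings are associative with identity, not necessarily commutative; $J(R)$ is the Jacobson radical. A ring is abelian if all its idempotents are central. A ring $S$ is $\pi$-regular if for every $a\in S$ there is $n\in\mathbb{N}$ with $a^n\in a^nSa^n$. An element $u\in R$ is full if $RuR=R$. An element $a\in R$ is feckly clean if there exist $e\in R$ and a full element $u\in R$ with $a=e+u$ and $eR(1-e)\subseteq J(R)$; $R$ is feckly clean if every element is feckly clean. *)

From HB Require Import structures.
From mathcomp Require Import all_boot all_order all_algebra.
Set Implicit Arguments. Unset Strict Implicit. Unset Printing Implicit Defensive.
Import GRing.Theory.
Local Open Scope ring_scope.

Definition left_ideal (R : pzRingType) (I : R -> Prop) : Prop :=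
  [/\ I 0, (forall x y, I x -> I y -> I (x + y)) & (forall r x, I x -> I (r * x))].

Definition maximal_left_ideal (R : pzRingType) (I : R -> Prop) : Prop :=
  [/\ left_ideal I, ~ I 1 &
      forall K : R -> Prop, left_ideal K -> (forall x, I x -> K x) ->
        (forall x, K x <-> I x) \/ (forall x, K x)].

Definition jacobson (R : pzRingType) (x : R) : Prop :=
  forall I : R -> Prop, maximal_left_ideal I -> I x.

(* u is full: R u R = R, i.e. 1 is a finite sum of elements r u s. *)
Definition full (R : pzRingType) (u : R) : Prop :=
  exists s : seq (R * R), \sum_(p <- s) p.1 * u * p.2 = 1.

Definition feckly_clean_elt (R : pzRingType) (a : R) : Prop :=
  exists e u : R, [/\ full u, a = e + u &
    forall r : R, jacobson (e * r * (1 - e))].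

Definition feckly_clean (R : pzRingType) : Prop :=
  forall a : R, feckly_clean_elt a.

(* Properties of the quotient R/J(R), stated on representatives:
   x + J(R) = y + J(R)  iff  jacobson (x - y). *)

(* R/J(R) is abelian: every idempotent of R/J(R) is central. *)
Definition quot_jacobson_abelian (R : pzRingType) : Prop :=
  forall e : R, jacobson (e * e - e) ->
    forall r : R, jacobson (e * r - r * e).

Definition quot_jacobson_pi_regular (R : pzRingType) : Prop :=
  forall a : R, exists n : nat, exists b : R,
    (0 < n)%N /\ jacobson (a ^+ n - a ^+ n * b * a ^+ n).

From mathcomp Require Import all_boot all_order all_algebra.
From mathcomp Require Import classical_sets.
From Stdlib Require Import Classical Setoid Morphisms.
Set Implicit Arguments. Unset Strict Implicit. Unset Printing Implicit Defensive.
Import GRing.Theory.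
Local Open Scope ring_scope.

(** If a^n = a^n b a^n modulo J(R), then h = b a^n is an idempotent, hence
    central, modulo J(R), and so is y = 1 - h.  Then a - y splits along y:
    on the corner h it is a h, which b a^(n-1) h inverts from the left since
    b a^n = h; on the corner y it is a y - y with a y nilpotent
    ((a y)^n = a^n y = 0), inverted by a geometric series.  So a - y is left
    invertible modulo J(R), hence left invertible, hence full; and y R (1 - y)
    lies in J(R) because y is a central idempotent modulo J(R). *)

Section Jacobson.
Variable R : pzRingType.
Local Notation J := (@jacobson R).

Lemma jacobson0 : J 0.
Proof. by move=> I [[I0 _ _] _ _]. Qed.

Lemma jacobsonD x y : J x -> J y -> J (x + y).
Proof. by move=> Jx Jy I MI; case: (MI) => [[_ ID _] _ _]; apply: ID; [apply: Jx|apply: Jy]. Qed.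

Lemma jacobsonMl r x : J x -> J (r * x).
Proof. by move=> Jx I MI; case: (MI) => [[_ _ IM] _ _]; apply: IM; apply: Jx. Qed.

Lemma jacobsonN x : J x -> J (- x).
Proof. by move=> Jx; rewrite -mulN1r; apply: jacobsonMl. Qed.

Lemma maximal_left_ideal_colon (I : set R) r :
  maximal_left_ideal I -> ~ (forall y, I (y * r)) ->
  maximal_left_ideal (fun y => I (y * r)).
Proof.
move=> [[I0 ID IM] _ Imax] Inot.
split.
- split; first by rewrite mul0r.
  + by move=> x y Ix Iy; rewrite mulrDl; apply: ID.
  + by move=> c x Ix; rewrite -mulrA; apply: IM.
- by move=> Ir1; apply: Inot => y; rewrite -[r]mul1r; apply: IM.
- move=> K [K0 KD KM] IK.
  pose Kr z := exists k i, [/\ K k, I i & z = k * r + i].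
  have LKr : left_ideal Kr.
    split.
    + by exists 0, 0; rewrite mul0r addr0.
    + move=> _ _ [k1 [i1 [Kk1 Ii1 ->]]] [k2 [i2 [Kk2 Ii2 ->]]].
      by exists (k1 + k2), (i1 + i2); rewrite mulrDl addrACA; split; [apply: KD|apply: ID|].
    + move=> c _ [k [i [Kk Ii ->]]].
      by exists (c * k), (c * i); rewrite mulrDr mulrA; split; [apply: KM|apply: IM|].
  have IKr z : I z -> Kr z by exists 0, z; rewrite mul0r add0r.
  case: (Imax Kr LKr IKr) => [Kr_eq|Kr_all].
  + left => z; split=> [Kz|]; last exact: IK.
    by apply/Kr_eq; exists z, 0; rewrite addr0.
  + right => y; have [k [i [Kk Ii E]]] := Kr_all (y * r).
    have Iyk : I ((y - k) * r) by rewrite mulrBl E addrAC subrr add0r.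
    by rewrite -(subrK k y); apply: KD => //; apply: IK.
Qed.

Lemma jacobsonMr x r : J x -> J (x * r).
Proof.
move=> Jx I MI; case: (classic (forall y, I (y * r))) => [Ir|Ir]; first exact: Ir.
exact: Jx _ (maximal_left_ideal_colon MI Ir).
Qed.

(* Krull's lemma; the disjunct [A = set0] lets Zorn's lemma cover the empty chain. *)
Lemma left_ideal_sub_maximal (L : set R) :
  left_ideal L -> ~ L 1 -> exists2 A, maximal_left_ideal A & (L `<=` A)%classic.
Proof.
move=> LL L1.
pose P (A : set R) := A = set0 \/ [/\ left_ideal A, (L `<=` A)%classic & ~ A 1].
have [A [PA Amax]] : exists A, P A /\ forall B, (A `<` B)%classic -> ~ P B.
  apply: Zorn_bigcup => F FP Ftot.
  have FP' X z : F X -> X z -> [/\ left_ideal X, (L `<=` X)%classic & ~ X 1].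
    by move=> FX Xz; case: (FP X FX) => // X0; rewrite X0 in Xz.
  case: (classic (exists X z, F X /\ X z)) => [[X0 [z0 [FX0 Xz0]]]|Fempty]; last first.
    by left; apply/seteqP; split => z // [X FX Xz]; apply: Fempty; exists X, z.
  right; split.
  - split.
    + by have [[I0 _ _] _ _] := FP' _ _ FX0 Xz0; exists X0.
    + move=> x y [X FX Xx] [Y FY Yy].
      have [[_ XD _] _ _] := FP' _ _ FX Xx; have [[_ YD _] _ _] := FP' _ _ FY Yy.
      case: (Ftot X Y FX FY) => [XY|YX].
      * by exists Y => //; apply: YD => //; apply: XY.
      * by exists X => //; apply: XD => //; apply: YX.
    + by move=> r x [X FX Xx]; have [[_ _ XM] _ _] := FP' _ _ FX Xx; exists X => //; apply: XM.
  - by move=> z Lz; have [_ LX _] := FP' _ _ FX0 Xz0; exists X0 => //; apply: LX.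
  - by move=> [X FX X1]; have [_ _ nX1] := FP' _ _ FX X1; apply: nX1.
have [L0 _ _] := LL.
case: PA => [A0|[LA LA_sub A1]].
  exfalso; apply: (Amax L); last by rewrite /P; right; split.
  by rewrite A0; split=> [|/(_ 0 L0)//]; apply: sub0set.
exists A => //; split => // K LK AK.
case: (classic (K 1)) => [K1|K1].
  by right => x; rewrite -[x]mulr1; have [_ _ KM] := LK; apply: KM.
left => x; split=> [Kx|]; last exact: AK.
apply: NNPP => Ax; apply: (Amax K); last by rewrite /P; right; split => // z Lz; apply/AK/LA_sub.
by split => // eqAK; apply: Ax; apply: eqAK.
Qed.

Lemma jacobson_left_unit j : J j -> exists v, v * (1 - j) = 1.
Proof.
move=> Jj; apply: NNPP => no_inv.
pose L z := exists v, z = v * (1 - j).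
have LL : left_ideal L.
  split; first by exists 0; rewrite mul0r.
  + by move=> _ _ [v1 ->] [v2 ->]; exists (v1 + v2); rewrite mulrDl.
  + by move=> r _ [v ->]; exists (r * v); rewrite mulrA.
have L1 : ~ L 1 by move=> [v v_inv]; apply: no_inv; exists v.
have [A MA LA] := left_ideal_sub_maximal LL L1.
have [[_ AD _] A1 _] := MA.
have A1j : A (1 - j) by apply: LA; exists 1; rewrite mul1r.
by apply: A1; rewrite -(subrK j 1); apply: AD => //; apply: Jj.
Qed.

Definition eqJ (x y : R) := J (x - y).

#[local] Instance eqJ_equiv : Equivalence eqJ.
Proof.
split.
- by move=> x; rewrite /eqJ subrr; apply: jacobson0.
- by move=> x y Jxy; rewrite /eqJ -opprB; apply: jacobsonN.
- by move=> x y z Jxy Jyz; rewrite /eqJ -(subrKA y); apply: jacobsonD.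
Qed.

#[local] Hint Extern 0 (eqJ _ _) => reflexivity : core.

#[local] Instance add_eqJ : Proper (eqJ ==> eqJ ==> eqJ) (@GRing.add R).
Proof. by move=> x x' Jx y y' Jy; rewrite /eqJ opprD addrACA; apply: jacobsonD. Qed.

#[local] Instance opp_eqJ : Proper (eqJ ==> eqJ) (@GRing.opp R).
Proof. by move=> x x' Jx; rewrite /eqJ -opprD; apply: jacobsonN. Qed.

#[local] Instance mul_eqJ : Proper (eqJ ==> eqJ ==> eqJ) (@GRing.mul R).
Proof.
move=> x x' Jx y y' Jy; rewrite /eqJ -(subrKA (x' * y)) -mulrBl -mulrBr.
by apply: jacobsonD; [apply: jacobsonMr|apply: jacobsonMl].
Qed.

Lemma full_left_invertible_modJ w u : eqJ (w * u) 1 -> full u.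
Proof.
move=> wu1; have [v vwu] : exists v, v * (1 - (1 - w * u)) = 1.
  by apply: jacobson_left_unit; rewrite -opprB; apply: jacobsonN.
by exists [:: (v * w, 1)]; rewrite big_seq1 /= mulr1 -mulrA -vwu subKr.
Qed.

Lemma geometric_left_inverse (z : R) m : exists s, s * (1 - z) = 1 - z ^+ m.
Proof.
exists (\sum_(i < m) z ^+ i).
have /commr_sym -> : GRing.comm (1 - z) (\sum_(i < m) z ^+ i).
  apply: commr_sum => i _; apply/commr_sym/commrB; first exact: commr1.
  exact/commr_sym/commrX/commr_refl.
by rewrite -[1 - z]opprB mulNr -subrX1 opprB.
Qed.

Section CentralIdempotent.
Variable e : R.
Hypothesis e_idem : eqJ (e * e) e.
Hypothesis e_central : forall r, eqJ (e * r) (r * e).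

Lemma mul_idem_compl : eqJ (e * (1 - e)) 0.
Proof. by rewrite mulrBr mulr1 e_idem subrr. Qed.

Lemma idem_compl : eqJ ((1 - e) * (1 - e)) (1 - e).
Proof. by rewrite mulrBl mul1r mul_idem_compl subr0. Qed.

Lemma central_compl r : eqJ ((1 - e) * r) (r * (1 - e)).
Proof. by rewrite mulrBl mulrBr mul1r mulr1 e_central. Qed.

Lemma central_idem_corner r : J (e * r * (1 - e)).
Proof.
suff : eqJ (e * r * (1 - e)) 0 by rewrite /eqJ subr0.
by rewrite e_central -mulrA mul_idem_compl mulr0.
Qed.

Lemma exprM_central_idem a m : eqJ ((a * e) ^+ m.+1) (a ^+ m.+1 * e).
Proof.
elim: m => [|m IHm]; first by rewrite !expr1.
by rewrite exprSr IHm -mulrA (mulrA e) e_central -mulrA e_idem mulrA -exprSr.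
Qed.

End CentralIdempotent.

Section PiRegular.
Variables (a b : R) (n : nat).
Hypothesis n_gt0 : (0 < n)%N.
Hypothesis regular : eqJ (a ^+ n) (a ^+ n * b * a ^+ n).
Hypothesis abelian : quot_jacobson_abelian R.

Let h := b * a ^+ n.
Let y := 1 - h.

Let h_idem : eqJ (h * h) h.
Proof. by rewrite /h -!mulrA (mulrA (a ^+ n)) -regular. Qed.

Let h_central r : eqJ (h * r) (r * h).
Proof. exact: abelian h_idem r. Qed.

Let y_idem : eqJ (y * y) y := idem_compl h_idem.
Let y_central r : eqJ (y * r) (r * y) := central_compl h_central r.

Let ay_nilpotent : eqJ ((a * y) ^+ n) 0.
Proof.
rewrite -(prednK n_gt0) exprM_central_idem // prednK //.
by rewrite /y /h mulrBr mulr1 mulrA -regular subrr.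
Qed.

Lemma pi_regular_left_inverse : exists w, eqJ (w * (a - y)) 1.
Proof.
have [s s_inv] : exists s, eqJ (s * (1 - a * y)) 1.
  have [s geo] := geometric_left_inverse (a * y) n.
  by exists s; rewrite geo ay_nilpotent subr0.
have inv_on_h : eqJ (b * a ^+ n.-1 * h * (a - y)) h.
  rewrite -mulrA mulrBr h_central mul_idem_compl // subr0 mulrA -(mulrA b).
  by rewrite -exprSr prednK // h_idem.
have inv_on_y : eqJ (- (s * y) * (a - y)) y.
  have y_factor : eqJ ((1 - a * y) * y) (y - a * y) by rewrite mulrBl mul1r -mulrA y_idem.
  by rewrite mulNr -mulrA mulrBr y_central y_idem -mulrN opprB -y_factor mulrA s_inv mul1r.
exists (b * a ^+ n.-1 * h - s * y).
by rewrite mulrDl inv_on_h inv_on_y /y addrC subrK.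
Qed.

Lemma pi_regular_corner r : J (y * r * (1 - y)).
Proof. exact: central_idem_corner y_idem y_central r. Qed.

End PiRegular.

End Jacobson.

Theorem theorem4p1 (R : pzRingType) :
  quot_jacobson_abelian R -> quot_jacobson_pi_regular R -> feckly_clean R.
Proof.
move=> abelian pi_regular a; have [n [b [n_gt0 regular]]] := pi_regular a.
have regularJ : eqJ (a ^+ n) (a ^+ n * b * a ^+ n) by [].
exists (1 - b * a ^+ n), (a - (1 - b * a ^+ n)); split.
- have [w w_inv] := pi_regular_left_inverse n_gt0 regularJ abelian.
  exact: full_left_invertible_modJ w_inv.
- by rewrite addrC subrK.
- exact: pi_regular_corner regularJ abelian.
Qed.
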